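(* Let $T\in(0,\infty)$, $d,m\in\mathbb{N}$, let $D\subseteq\mathbb{R}^d$ be open, $\mu\colon D\to\mathbb{R}^d$, $\sigma\colon D\to\mathbb{R}^{d\times m}$ functions, let $\phi\colon\mathbb{R}^d\times(0,T]\times\mathbb{R}^m\to\mathbb{R}^d$ be $(\mu,\sigma)$-consistent with respect to Brownian motion, and let $D_t\in\mathcal{B}(\mathbb{R}^d)$, $t\in(0,T]$, be a non-increasing family of sets with $D\subseteq\bigcup_{t\in(0,T]}\mathring{D}_t$. Then the function $\mathbb{R}^d\times(0,T]\times\mathbb{R}^m\ni(x,t,y)\mapsto\mathbb{1}_{D_t}(x)\,\phi(x,t,y)\in\mathbb{R}^d$ is $(\mu,\sigma)$-consistent with respect to Brownian motion.
   Context: Consistency: a function $\phi\colon\mathbb{R}^d\times(0,T]\times\mathbb{R}^m\to\mathbb{R}^d$ is $(\mu,\sigma)$-consistent with respect to Brownian motion if for every $t\in(0,T]$ the map $(x,y)\mapsto\phi(x,t,y)$ is Borel measurable and there exist a probability space and a standard $m$-dimensional Brownian motion $W$ on it such that for every nonempty compact $K\subseteq D$: $\limsup_{t\searrow0}\big(t^{-1/2}\sup_{x\in K}\mathbb{E}[\|\sigma(x)W_t-\phi(x,t,W_t)\|]\big)=0=\limsup_{t\searrow0}\big(\sup_{x\in K}\|\mu(x)-t^{-1}\mathbb{E}[\phi(x,t,W_t)]\|\big)$. Non-increasing family: $D_{t_2}\subseteq D_{t_1}$ for $t_1\le t_2$; $\mathring{D}_t$ is the interior. *)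

From HB Require Import structures.
From mathcomp Require Import all_boot all_order all_algebra.
From mathcomp Require Import all_classical all_reals all_analysis.
Set Implicit Arguments. Unset Strict Implicit. Unset Printing Implicit Defensive.
Import Order.TTheory GRing.Theory Num.Theory.
Import numFieldNormedType.Exports.
Local Open Scope classical_set_scope.
Local Open Scope ring_scope.

Section Defs.
Context {R : realType}.

Definition borel {T : topologicalType} : set (set T) :=
  <<s [set U : set T | open U] >>.

Definition borel_measurable {T U : topologicalType} (f : T -> U) : Prop :=
  forall B : set U, borel B -> borel (f @^-1` B).

Definition enorm {d : nat} (v : 'cV[R]_d) : R :=
  Num.sqrt (\sum_(i < d) v i 0 ^+ 2).

Definition Ecol {d0 : measure_display} {Om : measurableType d0}
  (P : probability Om R) {d : nat} (X : Om -> 'cV[R]_d) : 'cV[R]_d :=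
  \col_(i < d) Rintegral P setT (fun w => X w i 0).

(* Standard m-dimensional Brownian motion on [0, oo) on (Om, P):
   measurable marginals, W_0 = 0, continuous paths, and increments over
   0 = t_0 < t_1 < ... < t_n whose coordinates are independent with
   N(0, t_{k+1} - t_k) laws (joint law given on rectangles). *)
Definition is_std_BM {d0 : measure_display} {Om : measurableType d0}
  (P : probability Om R) {m : nat} (W : R -> Om -> 'cV[R]_m) : Prop :=
  [/\ (forall t, 0 <= t -> forall B : set 'cV[R]_m, borel B ->
          measurable (W t @^-1` B)),
      (forall w, W 0 w = 0),
      (forall w, {within `[0, +oo[, continuous (fun t => W t w)}) &
      (forall (n : nat) (ts : nat -> R) (A : nat -> 'I_m -> set R),
          ts 0%N = 0 -> (forall k, (k < n)%N -> ts k < ts k.+1) ->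
          (forall k j, measurable (A k j)) ->
          P [set w | forall k, (k < n)%N -> forall j,
                       W (ts k.+1) w j 0 - W (ts k) w j 0 \in A k j]
          = \big[*%E/1%E]_(k < n) \big[*%E/1%E]_(j < m)
              normal_prob 0 (Num.sqrt (ts k.+1 - ts k)) (A k j))].

(* (mu, sigma)-consistency with respect to Brownian motion of
   phi : R^d x (0,T] x R^m -> R^d (only t in (0,T] is relevant). *)
Definition bm_consistent {d m : nat} (T : R) (D : set 'cV[R]_d)
  (mu : 'cV[R]_d -> 'cV[R]_d) (sigma : 'cV[R]_d -> 'M[R]_(d, m))
  (phi : 'cV[R]_d -> R -> 'cV[R]_m -> 'cV[R]_d) : Prop :=
  (forall t, 0 < t <= T ->
     borel_measurable (fun p : 'cV[R]_d * 'cV[R]_m => phi p.1 t p.2)) /\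
  exists (d0 : measure_display) (Om : measurableType d0)
         (P : probability Om R) (W : R -> Om -> 'cV[R]_m),
    is_std_BM P W /\
    forall K : set 'cV[R]_d, compact K -> K !=set0 -> K `<=` D ->
      limf_esup (fun t : R => ((Num.sqrt t)^-1)%:E *
          ereal_sup [set (\int[P]_w
              (enorm (sigma x *m W t w - phi x t (W t w)))%:E)%E | x in K])%E
        (at_right (0 : R)) = 0%E /\
      limf_esup (fun t : R => ereal_sup
          [set (enorm (mu x - t^-1 *: Ecol P (fun w => phi x t (W t w))))%:E
          | x in K]) (at_right (0 : R)) = 0%E.

End Defs.

From HB Require Import structures.
From mathcomp Require Import all_boot all_order all_algebra.
From mathcomp Require Import all_classical all_reals all_analysis.
From mathcomp Require Import finmap.
Import Order.TTheory GRing.Theory Num.Theory.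
Import numFieldNormedType.Exports.
Local Open Scope classical_set_scope.
Local Open Scope ring_scope.

(* A compact K in D is covered by finitely many of the open sets
   interior (D_t); as the family is non-increasing, K lies in D_t for every
   small t > 0.  So near t = 0 the indicator 1_{D_t} equals 1 on K, and the
   two limits superior in the definition of consistency are literally those
   of phi.  Measurability holds because 1_{D_t}(x) phi(x, t, y) is phi on a
   Borel cylinder and 0 off it. *)

Section sigma_algebra_ops.
Context {T : Type} (G : set (set T)).

Lemma sigma_algebraU (A B : set T) :
  <<s G >> A -> <<s G >> B -> <<s G >> (A `|` B).
Proof.
move=> GA GB; rewrite -bigcup2E; apply: sigma_algebra_bigcup => -[|[|k]] //=.
exact: sigma_algebra0.
Qed.

Lemma sigma_algebraI (A B : set T) :
  <<s G >> A -> <<s G >> B -> <<s G >> (A `&` B).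
Proof.
move=> GA GB; rewrite -[A `&` B]setCK setCI -setTD; apply: sigma_algebraCD.
by apply: sigma_algebraU; rewrite -setTD; exact: sigma_algebraCD.
Qed.

Lemma sigma_algebra_cst (P : Prop) : <<s G >> [set _ : T | P].
Proof.
have [p|np] := pselect P.
  have -> : [set _ : T | P] = setT `\` set0.
    by rewrite setD0; apply/seteqP; split=> // x _.
  by apply: sigma_algebraCD; exact: sigma_algebra0.
have -> : [set _ : T | P] = set0 by apply/seteqP; split=> // x.
exact: sigma_algebra0.
Qed.

End sigma_algebra_ops.

Lemma borel_preimage {T U : topologicalType} (f : T -> U) (A : set U) :
  continuous f -> borel A -> borel (f @^-1` A).
Proof.
move=> cf; move: A; apply: smallest_sub => [|B oB]; last first.
  by apply: sub_sigma_algebra; apply: open_comp => // x _; exact: cf.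
split => /= [|B|F]; first by rewrite preimage_set0; exact: sigma_algebra0.
  by rewrite !setTD -preimage_setC -setTD; exact: sigma_algebraCD.
by rewrite preimage_bigcup; exact: sigma_algebra_bigcup.
Qed.

Lemma borel_measurable_indic_scale {T U : topologicalType} {K : numDomainType}
    {V : topologicalLmodType K} (f : T -> U) (S : set U) (g : T -> V) :
  continuous f -> borel S -> borel_measurable g ->
  borel_measurable (fun x => \1_S (f x) *: g x).
Proof.
move=> cf bS mg B bB.
have -> : (fun x => \1_S (f x) *: g x) @^-1` B =
    (f @^-1` S `&` g @^-1` B) `|` (~` (f @^-1` S) `&` [set _ | B 0]).
  apply/seteqP; split => x /=; have [Sx|nSx] := pselect (S (f x));
    rewrite indicE ?(mem_set Sx) ?(memNset nSx) ?scale1r ?scale0r.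
  - by left.
  - by right.
  - by case=> -[].
  - by case=> -[].
have bfS : borel (f @^-1` S) by apply: borel_preimage.
apply: sigma_algebraU; apply: sigma_algebraI; rewrite -?setTD //.
- exact: mg.
- exact: sigma_algebraCD.
- exact: sigma_algebra_cst.
Qed.

Lemma le_limf_esup_near {T : choiceType} {X : filteredType T}
    {R : realType} (F : set_system X) {FF : Filter F} (f g : X -> \bar R) :
  (\forall x \near F, f x <= g x)%E -> (limf_esup f F <= limf_esup g F)%E.
Proof.
move=> fg; rewrite !limf_esupE; apply: le_ereal_inf_tmp => _ [V FV <-].
set W := V `&` [set x | f x <= g x]%E.
have FW : F W by apply: filterI.
apply: (@le_trans _ _ (ereal_sup (f @` W))).
  by apply: ereal_inf_lbound; exists W.
apply: ge_ereal_sup => _ [x [Vx fgx] <-].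
by apply: le_trans fgx _; apply: ereal_sup_ubound; exists x.
Qed.

Lemma near_eq_limf_esup {T : choiceType} {X : filteredType T}
    {R : realType} (F : set_system X) {FF : Filter F} (f g : X -> \bar R) :
  (\forall x \near F, f x = g x) -> limf_esup f F = limf_esup g F.
Proof.
move=> fg; apply/eqP; rewrite eq_le !le_limf_esup_near //.
  by apply: filterS fg => x ->.
by apply: filterS fg => x ->.
Qed.

Lemma compact_near0_sub_nonincreasing {R : realType} {U : ptopologicalType}
    (T : R) (K : set U) (A : R -> set U) :
  0 < T -> compact K ->
  (forall t1 t2, 0 < t1 -> t1 <= t2 -> t2 <= T -> A t2 `<=` A t1) ->
  K `<=` \bigcup_(t in `]0, T]) interior (A t) ->
  \forall t \near 0^'+, K `<=` A t.
Proof.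
move=> T0 cK A_decr cover.
move: cK; rewrite compact_cover => /(_ R [set` `]0, T]] (interior \o A)).
case=> [t _|//|ts ts_sub Kts]; first exact: open_interior.
have ts_itv s : s \in ts -> 0 < s <= T.
  by move=> /ts_sub /set_mem /=; rewrite in_itv.
pose t0 := \big[Order.min/T]_(s <- ts) s.
have t0_gt0 : 0 < t0.
  rewrite /t0 big_seq; elim/big_ind: _ => // [a b a0 b0|s /ts_itv/andP[]//].
  by rewrite lt_min a0 b0.
near=> t => x Kx; have [s ts_s Ax] := Kts x Kx.
have /andP[s0 sT] := ts_itv s ts_s.
apply: (A_decr t s) => //; last exact: interior_subset.
apply: (@le_trans _ _ t0); last exact: ge_bigmin_seq.
by near: t; exact: nbhs_right_le.
Unshelve. all: by end_near.
Qed.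

Lemma bm_consistent_near_eq {R : realType} {d m : nat} (T : R)
    (D : set 'cV[R]_d) (mu : 'cV[R]_d -> 'cV[R]_d)
    (sigma : 'cV[R]_d -> 'M[R]_(d, m))
    (phi psi : 'cV[R]_d -> R -> 'cV[R]_m -> 'cV[R]_d) :
  (forall t, 0 < t <= T ->
     borel_measurable (fun p : 'cV[R]_d * 'cV[R]_m => psi p.1 t p.2)) ->
  (forall K, compact K -> K `<=` D ->
     \forall t \near 0^'+, forall x, K x -> psi x t = phi x t) ->
  bm_consistent T D mu sigma phi -> bm_consistent T D mu sigma psi.
Proof.
move=> psi_meas psi_phi [_ [d0 [Om [P [W [BM phi_cons]]]]]].
split=> //; exists d0, Om, P, W; split=> [|K cK K0 KD]; first exact: BM.
have [cons_sigma cons_mu] := phi_cons K cK K0 KD.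
split; [rewrite -cons_sigma | rewrite -cons_mu]; apply: near_eq_limf_esup;
  apply: filterS (psi_phi K cK KD) => t psi_phi_t.
- by apply: congr1; apply: congr1; apply: eq_imagel => x Kx; rewrite psi_phi_t.
- by apply: congr1; apply: eq_imagel => x Kx; rewrite psi_phi_t.
Qed.

Theorem lemma3p2 (R : realType) (T : R) (d m : nat) (D : set 'cV[R]_d)
  (mu : 'cV[R]_d -> 'cV[R]_d) (sigma : 'cV[R]_d -> 'M[R]_(d, m))
  (phi : 'cV[R]_d -> R -> 'cV[R]_m -> 'cV[R]_d) (Dt : R -> set 'cV[R]_d) :
  0 < T -> open D ->
  bm_consistent T D mu sigma phi ->
  (forall t, 0 < t <= T -> borel (Dt t)) ->
  (forall t1 t2, 0 < t1 -> t1 <= t2 -> t2 <= T -> Dt t2 `<=` Dt t1) ->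
  D `<=` \bigcup_(t in `]0, T]) interior (Dt t) ->
  bm_consistent T D mu sigma (fun x t y => \1_(Dt t) x *: phi x t y).
Proof.
move=> T0 _ phi_cons Dt_borel Dt_decr cover; have [phi_meas _] := phi_cons.
apply: bm_consistent_near_eq phi_cons => [t tT|K cK KD].
  apply: borel_measurable_indic_scale (Dt_borel t tT) (phi_meas t tT).
  by case=> x y; exact: cvg_fst.
have K_sub : \forall t \near 0^'+, K `<=` Dt t.
  exact: compact_near0_sub_nonincreasing T0 cK Dt_decr (subset_trans KD cover).
apply: filterS K_sub => t KDt x Kx; apply/funext => y.
by rewrite indicE mem_set ?scale1r //; exact: KDt.
Qed.
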